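(* Let $G=(V,E)$ be a multigraph with vertices $u_1,\dots,u_k$ ($k\ge2$) and edges $e_1,\dots,e_\ell$ with $\ell>2k$, and consider the fair division instance $\mathcal{I}(G)$ described in the context. If $G$ has no independent set of size larger than $t$, then every EF1 allocation of $\mathcal{I}(G)$ has social welfare at most $t+2$.
   Context: Instance $\mathcal{I}(G)$: agents are $a_i^{(j)}$ ($1\le i\le\ell$, $1\le j\le k$) and $s^{(j)}$ ($1\le j\le k$), so $n=k\ell+k$. Items are $b_r^{(j)}$ ($1\le r\le k$, $1\le j\le k$), with $B^{(j)}=\{b_1^{(j)},\dots,b_k^{(j)}\}$, and $c_1,\dots,c_{k^2}$ forming $C$, so $m=2k^2$. Let $\tau=2/k^2$. Agent $s^{(j)}$ values each item of $B^{(j)}$ at $1/k$ and every other item at $0$. If edge $e_i$ has endpoints $u_{i_1},u_{i_2}$, agent $a_i^{(j)}$ values each of $b_{i_1}^{(j)},b_{i_2}^{(j)}$ at $\tau/2$, each item of $C$ at $(1-\tau)/k^2$, and every other item at $0$. Valuations are additive (and normalized). An allocation is a partition of the items among agents; it is EF1 if for all agents $x\ne y$ with $A_y\ne\emptyset$ there is $g\in A_y$ with $v_x(A_x)\ge v_x(A_y\setminus\{g\})$; social welfare is $\sum_x v_x(A_x)$. An independent set is a set of vertices no two of which are joined by an edge. *)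

From mathcomp Require Import all_boot all_order all_algebra.
Set Implicit Arguments. Unset Strict Implicit. Unset Printing Implicit Defensive.
Import Order.TTheory GRing.Theory Num.Theory.
Local Open Scope ring_scope.

(* Multigraph G on vertices 'I_k (u_1..u_k) with edges 'I_l (e_1..e_l);
   edge i has endpoints e1 i and e2 i (no loops: e1 i != e2 i). *)

(* Agents: inl (i, j) = a_i^(j), inr j = s^(j). *)
Definition agent (k l : nat) := ('I_l * 'I_k + 'I_k)%type.
(* Items: inl (r, j) = b_r^(j), inr c = c_c  (c ranges over k^2 items). *)
Definition item (k : nat) := ('I_k * 'I_k + 'I_(k * k))%type.

Definition tau (R : realFieldType) (k : nat) : R := 2 / (k%:R ^+ 2).

Definition value (R : realFieldType) (k l : nat) (e1 e2 : 'I_l -> 'I_k)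
    (x : agent k l) (g : item k) : R :=
  match x, g with
  | inr j, inl (r, j') => if j' == j then 1 / k%:R else 0
  | inr _, inr _ => 0
  | inl (i, j), inl (r, j') =>
      if (j' == j) && ((r == e1 i) || (r == e2 i)) then tau R k / 2 else 0
  | inl _, inr _ => (1 - tau R k) / (k%:R ^+ 2)
  end.

Definition vbundle (R : realFieldType) (k l : nat) (e1 e2 : 'I_l -> 'I_k)
    (x : agent k l) (S : {set item k}) : R :=
  \sum_(g in S) value R e1 e2 x g.

(* An allocation (partition of all items among agents) is a map item -> agent. *)
Definition bundle (k l : nat) (A : item k -> agent k l) (y : agent k l)
  : {set item k} := [set g | A g == y].

Definition EF1 (R : realFieldType) (k l : nat) (e1 e2 : 'I_l -> 'I_k)
    (A : item k -> agent k l) : Prop :=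
  forall x y : agent k l, x != y -> bundle A y != set0 ->
    exists2 g, g \in bundle A y &
      vbundle R e1 e2 x (bundle A y :\ g) <= vbundle R e1 e2 x (bundle A x).

Definition social_welfare (R : realFieldType) (k l : nat) (e1 e2 : 'I_l -> 'I_k)
    (A : item k -> agent k l) : R :=
  \sum_(x : agent k l) vbundle R e1 e2 x (bundle A x).

Definition independent (k l : nat) (e1 e2 : 'I_l -> 'I_k) (S : {set 'I_k}) : bool :=
  [forall i : 'I_l, ~~ ((e1 i \in S) && (e2 i \in S))].

(* Since l*k > 2*k^2 = #items, some agent a_i^(j) receives nothing; it values
   every item of C positively, so EF1 towards it leaves at most one item of C in
   each bundle.  Then no a_i^(j) can have both b_(e1 i)^(j) and b_(e2 i)^(j) in
   the bundle of s^(j): each is worth tau/2 to it, more than its own bundle (at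
   most one item of C).  Hence the items of B^(j) kept by s^(j) are indexed by
   an independent set, so the s-agents get at most k * t/k = t in total, while
   every item gives any other agent at most tau/2 = 1/k^2, i.e. at most 2 over
   the 2k^2 items. *)

From Pilot Require Import Defs.
From mathcomp Require Import all_boot all_order all_algebra.
From mathcomp Require Import ring lra.
Import Order.TTheory GRing.Theory Num.Theory.
Local Open Scope ring_scope.

Set Implicit Arguments.
Unset Strict Implicit.
Unset Printing Implicit Defensive.

Lemma exists_notin_codom (T U : finType) (f : T -> U) (P : {pred U}) :
  (#|T| < #|P|)%N -> exists2 u, u \in P & forall x, f x != u.
Proof.
move=> ltTP; have /subsetPn[u Pu fTu] : ~~ (P \subset codom f).
  apply: contraL ltTP => /subset_leq_card lePf.
  by rewrite -leqNgt (leq_trans lePf) // (leq_trans (card_size _)) ?size_codom.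
by exists u => // x; apply: contraNneq fTu => <-; apply: codom_f.
Qed.

Lemma social_welfare_items (R : realFieldType) (k l : nat)
    (e1 e2 : 'I_l -> 'I_k) (A : item k -> agent k l) :
  social_welfare R e1 e2 A = \sum_g value R e1 e2 (A g) g.
Proof.
rewrite (partition_big A xpredT) //=; apply: eq_bigr => x _.
by apply: eq_big => g; rewrite inE // => /eqP ->.
Qed.

Section InstanceIG.

Variables (R : realFieldType) (k l : nat) (e1 e2 : 'I_l -> 'I_k).
Hypothesis k_ge2 : (2 <= k)%N.

Local Notation K := (k%:R : R).
Local Notation value := (value R e1 e2).
Local Notation vbundle := (vbundle R e1 e2).
Local Notation EF1 := (EF1 R e1 e2).
(* worth of an item of C to an agent a_i^(j) *)
Local Notation cval := ((1 - tau R k) / K ^+ 2).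

Lemma tau_half : tau R k / 2 = (K ^+ 2)^-1.
Proof.
have K0 : K != 0 by rewrite pnatr_eq0 -lt0n (leq_trans _ k_ge2).
by rewrite /tau; field.
Qed.

Lemma cval_gt0 : 0 < cval.
Proof.
have K2 : 2 <= K by rewrite (ler_nat R 2 k).
have K0 : 0 < K ^+ 2 by rewrite exprn_gt0 //; lra.
have tau_lt1 : tau R k < 1.
  by rewrite /tau ltr_pdivrMr // mul1r expr2; nra.
by rewrite divr_gt0 // subr_gt0.
Qed.

Lemma cval_lt_tau_half : cval < tau R k / 2.
Proof.
have K0 : 0 < K ^+ 2 by rewrite exprn_gt0 // ltr0n (leq_trans _ k_ge2).
have tau0 : 0 < tau R k / 2 by rewrite tau_half invr_gt0.
rewrite tau_half -[X in _ < X]mul1r ltr_pM2r ?invr_gt0 //; lra.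
Qed.

Lemma value_ge0 x g : 0 <= value x g.
Proof.
have tau0 : 0 <= tau R k / 2 by rewrite tau_half invr_ge0 exprn_ge0.
have iK0 : 0 <= K^-1 by rewrite invr_ge0.
case: x g => [[i j]|j] [[r j']|c] /=; try case: ifP; rewrite ?mul1r //.
exact: ltW cval_gt0.
Qed.

Lemma value_le_vbundle x (S : {set item k}) g :
  g \in S -> value x g <= vbundle x S.
Proof.
move=> Sg; rewrite /Defs.vbundle (bigD1 g) //= lerDl.
by apply: sumr_ge0 => h _; apply: value_ge0.
Qed.

(* Whichever item EF1 lets x remove from y's bundle, one of g1, g2 remains. *)
Lemma EF1_value_le_own A x y g1 g2 :
  EF1 A -> x != y -> g1 \in bundle A y -> g2 \in bundle A y -> g1 != g2 ->
  value x g1 = value x g2 -> value x g1 <= vbundle x (bundle A x).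
Proof.
move=> EF1A xy yg1 yg2 g12 eq_val.
have [|h yh le_own] := EF1A x y xy; first by apply/set0Pn; exists g1.
have [g1_h|g1h] := eqVneq g1 h.
  rewrite eq_val; apply: le_trans le_own; apply: value_le_vbundle.
  by rewrite in_setD1 -g1_h eq_sym g12.
by apply: le_trans le_own; apply: value_le_vbundle; rewrite in_setD1 g1h.
Qed.

Lemma EF1_C_item_inj A : EF1 A -> (2 * k < l)%N ->
  injective (fun c => A (inr c)).
Proof.
move=> EF1A lt2k_l c1 c2 /= eqA; apply/eqP; apply: contraT => c12.
have [_ /imsetP[p _ ->] Ap] : exists2 x, x \in inl @: [set: 'I_l * 'I_k] &
    forall g, A g != x.
  apply: exists_notin_codom; rewrite card_imset; last exact: inl_inj.
  rewrite cardsT card_sum !card_prod !card_ord addnn -mul2n mulnA.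
  by rewrite ltn_pmul2r // (leq_trans _ k_ge2).
have empty_p : bundle A (inl p) = set0.
  by apply/setP => g; rewrite !inE (negbTE (Ap g)).
have := @EF1_value_le_own A (inl p) (A (inr c1)) (inr c1) (inr c2).
rewrite empty_p /Defs.vbundle big_set0 inE eqA inE !eqxx eq_sym Ap.
case: p {Ap empty_p} => i j /= /(_ EF1A isT isT isT c12 erefl).
by rewrite leNgt cval_gt0.
Qed.

Lemma vbundle_a_agent_le A i j :
  injective (fun c => A (inr c)) ->
  A (inl (e1 i, j)) != inl (i, j) -> A (inl (e2 i, j)) != inl (i, j) ->
  vbundle (inl (i, j)) (bundle A (inl (i, j))) <= cval.
Proof.
move=> C_inj Ae1 Ae2.
have B_worthless r j' :
    A (inl (r, j')) = inl (i, j) -> value (inl (i, j)) (inl (r, j')) = 0.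
  move=> Arj /=; case: ifP => // /andP[/eqP ej /orP[]/eqP er].
    by rewrite er ej in Arj; rewrite Arj eqxx in Ae1.
  by rewrite er ej in Arj; rewrite Arj eqxx in Ae2.
have [c0 /eqP Ac0|noC] := pickP (fun c => A (inr c) == inl (i, j)).
  rewrite /Defs.vbundle (bigD1 (inr c0)) ?inE ?Ac0 //= big1 ?addr0 //.
  move=> [[r j']|c] /andP[/[!inE]/eqP Ag neq]; first exact: B_worthless.
  by rewrite (C_inj c c0) ?eqxx ?Ac0 in neq.
rewrite /Defs.vbundle big1; first exact: ltW cval_gt0.
move=> [[r j']|c] /[!inE]/eqP Ag; first exact: B_worthless.
by have := noC c; rewrite Ag eqxx.
Qed.

Lemma EF1_independent_s_items A j : EF1 A ->
  (forall i, e1 i != e2 i) ->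
  injective (fun c => A (inr c)) ->
  independent e1 e2 [set r | A (inl (r, j)) == inr j].
Proof.
move=> EF1A e12 C_inj; apply/forallP => i; rewrite !inE.
apply/negP => /andP[/eqP Ae1 /eqP Ae2].
have own_le : vbundle (inl (i, j)) (bundle A (inl (i, j))) <= cval.
  by apply: vbundle_a_agent_le; rewrite ?Ae1 ?Ae2.
have e12j : inl (e1 i, j) != inl (e2 i, j) :> item k.
  by apply: contra (e12 i) => /eqP[->].
have := @EF1_value_le_own A (inl (i, j)) (inr j) _ _ EF1A isT _ _ e12j.
rewrite !inE Ae1 Ae2 /= !eqxx /= orbT => /(_ isT isT erefl) tau_le.
by have := cval_lt_tau_half; lra.
Qed.

(* Only s^(j) gets more than 1/k^2 from an item: 1/k from each b_r^(j). *)
Lemma value_le_s_claim x g :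
  value x g <=
    (if g is inl (_, j) then (x == inr j)%:R / K else 0) + (K ^+ 2)^-1.
Proof.
have q0 : 0 <= (K ^+ 2)^-1 by rewrite invr_ge0 exprn_ge0.
have := cval_lt_tau_half; rewrite tau_half => cval_lt.
case: x g => [[i j]|j] [[r j']|c] /=; rewrite ?mul0r ?add0r //.
- by case: ifP; rewrite ?tau_half.
- exact: ltW.
- have -> : (inr j == inr j' :> agent k l) = (j' == j).
    by apply/eqP/eqP => [[]|->].
  by case: eqP => _; rewrite ?mul1r ?mul0r ?add0r ?lerDl.
Qed.

Lemma sum_s_claims (A : item k -> agent k l) :
  \sum_(g : item k) (if g is inl (_, j) then (A g == inr j)%:R / K else 0) =
  \sum_(j < k) #|[set r | A (inl (r, j)) == inr j]|%:R / K.
Proof.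
transitivity (\sum_(j < k) \sum_(r < k) (A (inl (r, j)) == inr j)%:R / K).
  rewrite big_sumType /= [X in _ + X]big1 // addr0 exchange_big pair_bigA /=.
  by apply: eq_big => // -[].
apply: eq_bigr => j _; rewrite -big_distrl -sumr_const /=.
congr (_ / _); rewrite [RHS]big_mkcond.
by apply: eq_bigr => r _; rewrite inE; case: eqP.
Qed.

Lemma sum_items_inv_sqr : \sum_(g : item k) (K ^+ 2)^-1 = 2.
Proof.
have K0 : K != 0 by rewrite pnatr_eq0 -lt0n (leq_trans _ k_ge2).
rewrite sumr_const card_sum card_prod !card_ord.
by rewrite -[LHS]mulr_natr natrD natrM; field.
Qed.

End InstanceIG.

Theorem mainTheorem13 (R : realFieldType) (k l : nat)
    (e1 e2 : 'I_l -> 'I_k) (t : nat) :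
  (2 <= k)%N -> (2 * k < l)%N ->
  (forall i : 'I_l, e1 i != e2 i) ->
  (forall S : {set 'I_k}, independent e1 e2 S -> (#|S| <= t)%N) ->
  forall A : item k -> agent k l,
    EF1 R e1 e2 A -> social_welfare R e1 e2 A <= t%:R + 2.
Proof.
move=> k_ge2 lt2k_l e12 indep_le A EF1A.
have K_gt0 : 0 < k%:R :> R by rewrite ltr0n (leq_trans _ k_ge2).
have C_inj := EF1_C_item_inj k_ge2 EF1A lt2k_l.
have s_le j :
    #|[set r | A (inl (r, j)) == inr j]|%:R / k%:R <= t%:R / k%:R :> R.
  rewrite ler_pM2r ?invr_gt0 // ler_nat; apply: indep_le.
  exact: (EF1_independent_s_items k_ge2 j EF1A e12 C_inj).
rewrite social_welfare_items.
apply: le_trans; first by apply: ler_sum => g _; apply: value_le_s_claim.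
rewrite big_split /= sum_s_claims sum_items_inv_sqr // lerD2r.
apply: le_trans; first by apply: ler_sum => j _; apply: s_le.
by rewrite sumr_const card_ord -[X in X <= _]mulr_natr divfK ?gt_eqF.
Qed.
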